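(* Let $(x_j)_{j=1}^\infty$ be a Riesz basis for a real infinite dimensional Hilbert space $H$, and let $x\in H$. Then $(x_j)_{j=1}^\infty$ does stable phase retrieval near $x$ if and only if $\langle x,x_j\rangle=0$ for all but finitely many $j\in\mathbb N$.
   Context: The analysis operator of $(x_j)_{j=1}^\infty$ is $\Theta(x)=(\langle x,x_j\rangle)_{j=1}^\infty\in\ell_2$ and $|\Theta x|=(|\langle x,x_j\rangle|)_j$. For $x,y$ with $x\neq\pm y$, set $\Psi(x,y)=\||\Theta x|-|\Theta y|\|/\min_{\lambda=\pm1}\|x-\lambda y\|$. For $C>0$, the family does $C$-stable phase retrieval near $x$ if $\liminf_{y\to x,\ y\neq\pm x} C\,\Psi(x,y)\ge1$, and does stable phase retrieval near $x$ if this holds for some $C>0$. *)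

From HB Require Import structures.
From mathcomp Require Import all_boot all_order all_algebra.
From mathcomp Require Import all_classical all_reals all_analysis.
Set Implicit Arguments. Unset Strict Implicit. Unset Printing Implicit Defensive.
Import Order.TTheory GRing.Theory Num.Theory.
Import numFieldNormedType.Exports.
Local Open Scope ring_scope.

Section Defs.
Variable R : realType.
Variable H : normedModType R.

Definition is_inner_product (ip : H -> H -> R) : Prop :=
  [/\ forall (a : R) (x y z : H), ip (a *: x + y) z = a * ip x z + ip y z,
      forall x y : H, ip x y = ip y x
    & forall x : H, ip x x = `|x| ^+ 2].

Definition infinite_dimensional : Prop :=
  forall n : nat, exists v : 'I_n -> H,
    forall c : 'I_n -> R, \sum_(i < n) c i *: v i = 0 -> forall i, c i = 0.

Definition riesz_basis (xs : nat -> H) : Prop :=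
  (forall (y : H) (e : R), 0 < e ->
     exists (n : nat) (c : nat -> R), `|y - \sum_(j < n) c j *: xs j| < e) /\
  exists A B : R, [/\ 0 < A, 0 < B &
    forall (n : nat) (c : nat -> R),
      A * \sum_(j < n) c j ^+ 2 <= `|\sum_(j < n) c j *: xs j| ^+ 2
      /\ `|\sum_(j < n) c j *: xs j| ^+ 2 <= B * \sum_(j < n) c j ^+ 2].

Definition abs_analysis_dist (ip : H -> H -> R) (xs : nat -> H) (x y : H) : R :=
  Num.sqrt (limn (fun n => \sum_(j < n) (`|ip x (xs j)| - `|ip y (xs j)|) ^+ 2)).

Definition Psi (ip : H -> H -> R) (xs : nat -> H) (x y : H) : R :=
  abs_analysis_dist ip xs x y / Num.min `|x - y| `|x + y|.

(* liminf_{y -> x, y <> +-x} C * Psi(x,y) >= 1, written out *)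
Definition C_stable_pr_near (ip : H -> H -> R) (xs : nat -> H) (C : R) (x : H) : Prop :=
  forall e : R, 0 < e -> exists d : R, 0 < d /\
    forall y : H, `|y - x| < d -> y <> x -> y <> - x -> 1 - e <= C * Psi ip xs x y.

Definition stable_pr_near (ip : H -> H -> R) (xs : nat -> H) (x : H) : Prop :=
  exists C : R, 0 < C /\ C_stable_pr_near ip xs C x.

End Defs.

From HB Require Import structures.
From mathcomp Require Import all_boot all_order all_algebra.
From mathcomp Require Import all_classical all_reals all_analysis.
From mathcomp Require Import ring lra.
Import Order.TTheory GRing.Theory Num.Theory.
Import numFieldNormedType.Exports.
Set Implicit Arguments. Unset Strict Implicit.
Local Open Scope classical_set_scope.
Local Open Scope ring_scope.

(* If only finitely many coefficients <x, x_j> are nonzero, they are bounded away from 0, so for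
   y close to x the nonzero ones keep their sign; then every entry of |Θx| - |Θy| is
   ±<x - y, x_j> (a vanishing coefficient gives -|<y, x_j>|), and the lower Riesz bound A gives
   Ψ(x, y) >= √A.
   Conversely the coefficients of x are square summable, hence tend to 0, so if infinitely many
   of them are nonzero there is a tiny nonzero one, a = <x, x_k>.  Let w be biorthogonal to the
   x_j with j <> k (the residual of x_k after projecting onto the closed span of the other x_j,
   which exists by completeness).  Then y = x - (2a/‖w‖²) w only flips the sign of the k-th
   coefficient, so |Θy| = |Θx| and Ψ(x, y) = 0, while y <> ±x and ‖y - x‖ <= 2|a|/√A. *)

Section InnerProduct.
Variables (R : realType) (H : normedModType R) (ip : H -> H -> R).
Hypothesis hip : is_inner_product ip.

Lemma ipC (x y : H) : ip x y = ip y x.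
Proof. by case: hip. Qed.

Lemma ipxx (x : H) : ip x x = `|x| ^+ 2.
Proof. by case: hip. Qed.

Lemma ipDl (x y z : H) : ip (x + y) z = ip x z + ip y z.
Proof. by case: hip => hl _ _; have := hl 1 x y z; rewrite scale1r mul1r. Qed.

Lemma ip0l (z : H) : ip 0 z = 0.
Proof. by have := ipDl 0 0 z; rewrite addr0; lra. Qed.

Lemma ipZl (a : R) (x z : H) : ip (a *: x) z = a * ip x z.
Proof. by case: hip => hl _ _; have := hl a x 0 z; rewrite addr0 ip0l addr0. Qed.

Lemma ipNl (x z : H) : ip (- x) z = - ip x z.
Proof. by rewrite -scaleN1r ipZl mulN1r. Qed.

Lemma ipBl (x y z : H) : ip (x - y) z = ip x z - ip y z.
Proof. by rewrite ipDl ipNl. Qed.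

Lemma ipDr (x y z : H) : ip z (x + y) = ip z x + ip z y.
Proof. by rewrite !(ipC z) ipDl. Qed.

Lemma ipZr (a : R) (x z : H) : ip z (a *: x) = a * ip z x.
Proof. by rewrite !(ipC z) ipZl. Qed.

Lemma ipBr (x y z : H) : ip z (x - y) = ip z x - ip z y.
Proof. by rewrite !(ipC z) ipBl. Qed.

Lemma ip_sumr (z : H) (xs : nat -> H) (c : nat -> R) (n : nat) :
  ip z (\sum_(j < n) c j *: xs j) = \sum_(j < n) c j * ip z (xs j).
Proof.
elim: n => [|n IH]; first by rewrite !big_ord0 ipC ip0l.
by rewrite !big_ord_recr /= ipDr IH ipZr.
Qed.

Lemma sqr_normB (x y : H) : `|x - y| ^+ 2 = `|x| ^+ 2 - 2 * ip x y + `|y| ^+ 2.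
Proof. by rewrite -!ipxx ipBl !ipBr (ipC y x); lra. Qed.

Lemma sqr_normD (x y : H) : `|x + y| ^+ 2 = `|x| ^+ 2 + 2 * ip x y + `|y| ^+ 2.
Proof. by rewrite -!ipxx !ipDl !ipDr (ipC y x); lra. Qed.

Lemma parallelogram (x y : H) :
  `|x + y| ^+ 2 + `|x - y| ^+ 2 = 2 * `|x| ^+ 2 + 2 * `|y| ^+ 2.
Proof. by rewrite sqr_normD sqr_normB; lra. Qed.

Lemma cauchy_schwarz (u v : H) : `|ip u v| <= `|u| * `|v|.
Proof.
have [->|u0] := eqVneq u 0; first by rewrite ip0l !normr0 mul0r.
have hu : 0 < `|u| ^+ 2 by rewrite exprn_gt0 // normr_gt0.
have key : 0 <= `|u| ^+ 2 * (`|u| ^+ 2 * `|v| ^+ 2 - ip u v ^+ 2).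
  have := sqr_ge0 `| `|u| ^+ 2 *: v - ip u v *: u|.
  rewrite sqr_normB !normrZ ipZl ipZr (ipC v u) !exprMn normr_id.
  by rewrite real_normK ?num_real //; nra.
rewrite -(ler_pXn2r (n := 2)) ?nnegrE ?mulr_ge0 // real_normK ?num_real //.
rewrite exprMn; nra.
Qed.

Lemma ip_eq0_of_min (w z : H) :
  (forall s : R, `|w| ^+ 2 <= `|w - s *: z| ^+ 2) -> ip w z = 0.
Proof.
have [->|z0] := eqVneq z 0; first by rewrite ipC ip0l.
have hz : 0 < `|z| ^+ 2 by rewrite exprn_gt0 // normr_gt0.
set t := ip w z; set q := t / `|z| ^+ 2.
have hq : q * `|z| ^+ 2 = t by rewrite /q divfK // gt_eqF.
move=> /(_ q); rewrite sqr_normB ipZr normrZ exprMn real_normK ?num_real // -/t => h.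
have /eqP : q ^+ 2 = 0 by apply/eqP; rewrite eq_le sqr_ge0 andbT; nra.
by rewrite sqrf_eq0 -hq => /eqP ->; rewrite mul0r.
Qed.

End InnerProduct.

Section Limits.
Variable R : realType.

Lemma cvg_sqr_norm (V : normedModType R) (f : nat -> V) (q : V) :
  f @ \oo --> q -> `|f n| ^+ 2 @[n --> \oo] --> `|q| ^+ 2.
Proof. by move=> fq; rewrite expr2; apply: cvgM; apply: cvg_norm. Qed.

Lemma sqr_norm_lim_ge (V : normedModType R) (f : nat -> V) (q : V) (m : R) :
  f @ \oo --> q -> (forall n, m <= `|f n| ^+ 2) -> m <= `|q| ^+ 2.
Proof.
move=> fq hm; rewrite -(cvg_lim _ (cvg_sqr_norm fq)) //.
by apply: limr_ge; [apply/cvg_ex; eexists; exact: cvg_sqr_norm fq | exact: nearW].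
Qed.

Lemma sqr_norm_lim_le (V : normedModType R) (f : nat -> V) (q : V) (m : R) :
  f @ \oo --> q -> (forall e, 0 < e -> \forall n \near \oo, `|f n| ^+ 2 <= m + e) ->
  `|q| ^+ 2 <= m.
Proof.
move=> fq hm; apply/ler_addgt0Pr => e he.
rewrite -(cvg_lim _ (cvg_sqr_norm fq)) //.
by apply: limr_le; [apply/cvg_ex; eexists; exact: cvg_sqr_norm fq | exact: hm].
Qed.

Lemma cvgn_of_sqr_dist_le (V : completeNormedModType R) (u : nat -> V) (e : nat -> R) :
  e @ \oo --> 0 -> (forall m n, `|u m - u n| ^+ 2 <= e m + e n) -> cvgn u.
Proof.
move=> e0 hu; apply/cauchy_cvgP/cauchy_exP => eps heps.
have heps2 : 0 < eps ^+ 2 / 2 by rewrite divr_gt0 ?exprn_gt0.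
have [N _ hN] := cvgr_dist_lt _ _ e0 _ heps2.
exists (u N), N => // n /= hn; rewrite -ball_normE /ball_ /=.
have := hN N (leqnn N); have := hN n hn; rewrite /= !sub0r !normrN => hen heN.
have := hu N n; have := ler_norm (e N); have := ler_norm (e n).
rewrite -(ltr_pXn2r (n := 2)) ?nnegrE ?(ltW heps) //; lra.
Qed.

End Limits.

Section Projection.
Variables (R : realType) (H : completeNormedModType R) (ip : H -> H -> R).
Hypothesis hip : is_inner_product ip.
Variables (D : set H) (v : H).
Hypotheses (D0 : D 0)
  (Dlin : forall (a b : R) (x y : H), D x -> D y -> D (a *: x + b *: y)).

Let S : set R := [set `|v - u| ^+ 2 | u in D].
Let d := inf S.

Let has_inf_S : has_inf S.
Proof. by split; [exists (`|v - 0| ^+ 2), 0 | exists 0 => _ [u _ <-]; apply: sqr_ge0]. Qed.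

Lemma dist_inf_le (u : H) : D u -> d <= `|v - u| ^+ 2.
Proof. by move=> Du; apply: ge_inf; [case: has_inf_S | exists u]. Qed.

Lemma le_dist_inf (m : R) : (forall u, D u -> m <= `|v - u| ^+ 2) -> m <= d.
Proof. by move=> hm; apply: lb_le_inf; [case: has_inf_S | move=> _ [u Du <-]; apply: hm]. Qed.

Lemma dist_inf_le_lim (g : nat -> H) (q : H) :
  (forall n, D (g n)) -> g @ \oo --> q -> d <= `|v - q| ^+ 2.
Proof.
move=> Dg gq; apply: (@sqr_norm_lim_ge _ _ (fun n => v - g n)) => [|n].
  by apply: cvgB => //; apply: cvg_cst.
exact: dist_inf_le.
Qed.

Lemma exists_minimizing_seq :
  exists u : nat -> H, forall n, D (u n) /\ `|v - u n| ^+ 2 <= d + n.+1%:R^-1.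
Proof.
have hu n : exists u, D u /\ `|v - u| ^+ 2 <= d + n.+1%:R^-1.
  have hn : 0 < n.+1%:R^-1 :> R by rewrite invr_gt0.
  have [_ [u Du <-] hu] := inf_adherent hn has_inf_S.
  by exists u; split; last exact: ltW.
by have [u] := choice hu; exists u.
Qed.

Lemma midpoint_sqr_dist (a b : H) : D a -> D b ->
  `|a - b| ^+ 2 <= 2 * (`|v - a| ^+ 2 - d) + 2 * (`|v - b| ^+ 2 - d).
Proof.
move=> Da Db; have := dist_inf_le (Dlin 2^-1 2^-1 Da Db).
have -> : v - (2^-1 *: a + 2^-1 *: b) = 2^-1 *: ((v - a) + (v - b)).
  have h2 : 2^-1 + 2^-1 = 1 :> R by field.
  by rewrite scalerDr !scalerBr addrACA -scalerDl h2 scale1r opprD.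
have := parallelogram hip (v - a) (v - b).
have -> : v - a - (v - b) = b - a by rewrite opprB addrC addrA subrK.
rewrite normrZ exprMn ger0_norm ?invr_ge0 // distrC; lra.
Qed.

Lemma exists_nearest_point : exists (u : nat -> H) (p : H),
  [/\ forall n, D (u n), u @ \oo --> p & `|v - p| ^+ 2 = d].
Proof.
have [u hu] := exists_minimizing_seq.
have e0 : (fun n => 2 * n.+1%:R^-1) @ \oo --> (0 : R).
  by rewrite -(mulr0 2); apply: cvgM; [exact: cvg_cst | exact: cvg_harmonic].
have cu : cvgn u.
  apply: (cvgn_of_sqr_dist_le e0) => m n /=.
  have := midpoint_sqr_dist (hu m).1 (hu n).1; have := (hu m).2; have := (hu n).2.
  (* [lra] rejects inverses of non-constants, hence the generalization. *)
  by move: (m.+1%:R^-1) (n.+1%:R^-1) => a b; lra.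
exists u, (limn u); split => //; first by move=> n; case: (hu n).
apply/eqP; rewrite eq_le; apply/andP; split; last exact: dist_inf_le_lim (fun n => (hu n).1) cu.
apply: (@sqr_norm_lim_le _ _ (fun n => v - u n)); first by apply: cvgB => //; apply: cvg_cst.
move=> e he; have [N _ hN] := near_infty_natSinv_lt (PosNum he).
by exists N => // n /hN /=; have := (hu n).2; move: (n.+1%:R^-1) => t; lra.
Qed.

(* Hilbert projection theorem: [w = v - p] for the point [p] of the closure of [D] nearest to [v]. *)
Theorem exists_orthogonal_residual : exists w : H,
  [/\ forall m, (forall u, D u -> m <= `|v - u| ^+ 2) -> m <= `|w| ^+ 2,
      forall u, D u -> ip w u = 0
    & ip w v = `|w| ^+ 2].
Proof.
have [u [p [Du up hp]]] := exists_nearest_point.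
have orth (z : H) (g : R -> nat -> H) : (forall s n, D (g s n)) ->
    (forall s, g s @ \oo --> p + s *: z) -> ip (v - p) z = 0.
  move=> Dg gz; apply: (ip_eq0_of_min hip) => s.
  by rewrite hp -addrA -opprD; apply: dist_inf_le_lim (Dg s) (gz s).
have hpp : ip (v - p) p = 0.
  apply: (orth p (fun s n => (1 + s) *: u n)) => [s n|s].
    by have := Dlin (1 + s) 0 (Du n) D0; rewrite scaler0 addr0.
  by rewrite -{1}[p]scale1r -scalerDl; apply: cvgZr.
exists (v - p); split.
- by move=> m hm; rewrite hp; apply: le_dist_inf.
- move=> z Dz; apply: (orth z (fun s n => u n + s *: z)) => [s n|s].
    by have := Dlin 1 s (Du n) Dz; rewrite scale1r.
  by apply: cvgD => //; apply: cvg_cst.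
- by rewrite -{2}[v](subrK p) (ipDr hip) hpp addr0 (ipxx hip).
Qed.

End Projection.

Section FiniteCombinations.
Variables (R : realType) (H : normedModType R) (xs : nat -> H).

Lemma sum_widen (c : nat -> R) (n m : nat) : (n <= m)%N ->
  \sum_(j < n) c j *: xs j = \sum_(j < m) (if (j < n)%N then c j else 0) *: xs j.
Proof.
move=> nm; rewrite (big_ord_widen _ (fun j => c j *: xs j) nm) big_mkcond.
by apply: eq_bigr => j _; case: ifP; rewrite ?scale0r.
Qed.

Lemma sum_indicator (k m : nat) : (k < m)%N ->
  \sum_(j < m) (j == k :> nat)%:R *: xs j = xs k.
Proof.
move=> km; rewrite (bigD1 (Ordinal km)) //= eqxx scale1r big1 ?addr0 // => j jk.
suff /negbTE -> : (j : nat) != k by rewrite scale0r.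
by apply: contra jk => /eqP jk; apply/eqP/val_inj.
Qed.

Definition complete_seq : Prop := forall (y : H) (e : R), 0 < e ->
  exists (n : nat) (c : nat -> R), `|y - \sum_(j < n) c j *: xs j| < e.

Definition lower_riesz_bound (A : R) : Prop := forall n (c : nat -> R),
  A * \sum_(j < n) c j ^+ 2 <= `|\sum_(j < n) c j *: xs j| ^+ 2.

Definition upper_riesz_bound (B : R) : Prop := forall n (c : nat -> R),
  `|\sum_(j < n) c j *: xs j| ^+ 2 <= B * \sum_(j < n) c j ^+ 2.

Lemma riesz_basisP : riesz_basis xs -> complete_seq /\
  exists A B, [/\ 0 < A, 0 < B, lower_riesz_bound A & upper_riesz_bound B].
Proof.
case=> dense [A [B [hA hB hAB]]]; split => //.
by exists A, B; split => // n c; case: (hAB n c).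
Qed.

Definition span_without (k : nat) (u : H) : Prop :=
  exists n (c : nat -> R), c k = 0 /\ u = \sum_(j < n) c j *: xs j.

Lemma span_without0 k : span_without k 0.
Proof. by exists 0%N, (fun=> 0); rewrite big_ord0. Qed.

Lemma span_without_lin k (a b : R) (u v : H) :
  span_without k u -> span_without k v -> span_without k (a *: u + b *: v).
Proof.
move=> [n [c [ck ->]]] [m [c' [c'k ->]]].
exists (n + m)%N, (fun j => a * (if (j < n)%N then c j else 0) + b * (if (j < m)%N then c' j else 0)).
split; first by rewrite ck c'k; case: ifP; case: ifP; rewrite ?mulr0 ?addr0.
rewrite (sum_widen c (leq_addr m n)) (sum_widen c' (leq_addl n m)).
by rewrite !scaler_sumr -big_split; apply: eq_bigr => j _; rewrite scalerDl !scalerA.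
Qed.

Lemma span_without_xs k j : j != k -> span_without k (xs j).
Proof.
move=> jk; exists j.+1, (fun i => (i == j)%:R).
by rewrite eq_sym (negbTE jk) sum_indicator.
Qed.

End FiniteCombinations.

Lemma sqr_norm_subr_near (R : realDomainType) (a b : R) :
  `|a - b| < `|a| -> (`|a| - `|b|) ^+ 2 = (a - b) ^+ 2.
Proof.
case: (lerP 0 a) => ha; case: (lerP 0 b) => hb;
  rewrite ?(ger0_norm ha) ?(ltr0_norm ha) ?(ger0_norm hb) ?(ltr0_norm hb);
  case: (lerP 0 (a - b)) => hab; rewrite ?(ger0_norm hab) ?(ltr0_norm hab); nra.
Qed.

Lemma exists_pos_lbound_nonzero (R : realDomainType) (f : nat -> R) (N : nat) :
  exists d : R, 0 < d /\ forall j, (j < N)%N -> f j != 0 -> d <= `|f j|.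
Proof.
elim: N => [|N [d [hd IH]]]; first by exists 1; split => // j.
have [fN0|fN] := eqVneq (f N) 0.
  exists d; split => // j; rewrite ltnS leq_eqVlt => /predU1P [-> |]; first by rewrite fN0 eqxx.
  exact: IH.
exists (Num.min d `|f N|); split; first by rewrite lt_min hd normr_gt0 fN.
move=> j; rewrite ltnS leq_eqVlt => /predU1P [-> _|hj hf]; first by rewrite ge_min lexx orbT.
by rewrite ge_min IH.
Qed.

Section PhaseRetrieval.
Variables (R : realType) (H : normedModType R) (ip : H -> H -> R).
Hypothesis hip : is_inner_product ip.
Variable xs : nat -> H.

Lemma Psi_eq0 (x y : H) :
  (forall j, `|ip x (xs j)| = `|ip y (xs j)|) -> Psi ip xs x y = 0.
Proof.
move=> hxy; rewrite /Psi /abs_analysis_dist.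
have -> : (fun n => \sum_(j < n) (`|ip x (xs j)| - `|ip y (xs j)|) ^+ 2) = fun=> 0.
  by apply: funext => n; rewrite big1 // => j _; rewrite hxy subrr expr0n.
by rewrite lim_cst // sqrtr0 mul0r.
Qed.

Lemma sqr_abs_coef_dist_near (x : H) (N : nat) :
  (forall j, (N <= j)%N -> ip x (xs j) = 0) ->
  exists d : R, 0 < d /\ forall y, `|x - y| < d -> forall j,
    (`|ip x (xs j)| - `|ip y (xs j)|) ^+ 2 = ip (x - y) (xs j) ^+ 2.
Proof.
move=> hN.
have [d [hd hdj]] := exists_pos_lbound_nonzero (fun j => ip x (xs j) / (`|xs j| + 1)) N.
exists d; split => // y hxy j; rewrite (ipBl hip).
have [->|anz] := eqVneq (ip x (xs j)) 0.
  by rewrite normr0 sub0r add0r !sqrrN real_normK ?num_real.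
apply: sqr_norm_subr_near; rewrite -(ipBl hip).
have hj : (j < N)%N by rewrite ltnNge; apply: contra anz => /hN ->.
have hx1 : 0 < `|xs j| + 1 by rewrite ltr_pwDr.
have := hdj j hj (mulf_neq0 anz (invr_neq0 (lt0r_neq0 hx1))).
rewrite normrM normfV (gtr0_norm hx1) ler_pdivlMr // => hd2.
apply: le_lt_trans (cauchy_schwarz hip _ _) _.
have : `|x - y| * (`|xs j| + 1) < d * (`|xs j| + 1) by rewrite ltr_pM2r.
by have := normr_ge0 (x - y); nra.
Qed.

End PhaseRetrieval.

Section RieszSequence.
Variables (R : realType) (H : normedModType R) (ip : H -> H -> R).
Hypothesis hip : is_inner_product ip.
Variables (xs : nat -> H) (A B : R).
Hypotheses (hA : 0 < A) (hB : 0 < B).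
Hypotheses (riesz_lower : lower_riesz_bound xs A)
  (riesz_upper : upper_riesz_bound xs B).

Lemma bessel (z : H) n : \sum_(j < n) ip z (xs j) ^+ 2 <= B * `|z| ^+ 2.
Proof.
set T := \sum_(j < n) _; set u := \sum_(j < n) ip z (xs j) *: xs j.
have hzu : ip z u = T.
  rewrite /u (ip_sumr hip z xs (fun j => ip z (xs j))).
  by apply: eq_bigr => j _; rewrite expr2.
have := sqr_ge0 `|B *: z - u|; rewrite (sqr_normB hip) normrZ (ipZl hip) hzu.
rewrite exprMn (gtr0_norm hB) => h.
have hu : `|u| ^+ 2 <= B * T := riesz_upper n (fun j => ip z (xs j)).
have : B * T <= B * (B * `|z| ^+ 2) by nra.
by rewrite ler_pM2l.
Qed.

Lemma sum_coef_sqr_series (z : H) :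
  (fun n => \sum_(j < n) ip z (xs j) ^+ 2) = series (fun j => ip z (xs j) ^+ 2).
Proof. by apply: funext => n; rewrite /series /= big_mkord. Qed.

Lemma sum_coef_sqr_nondecreasing (z : H) :
  {homo (fun n => \sum_(j < n) ip z (xs j) ^+ 2) : n m / (n <= m)%N >-> n <= m}.
Proof. by rewrite sum_coef_sqr_series; apply: nondecreasing_series => j _ _; apply: sqr_ge0. Qed.

Lemma cvgn_sum_coef_sqr (z : H) : cvgn (fun n => \sum_(j < n) ip z (xs j) ^+ 2).
Proof.
apply: nondecreasing_is_cvgn; first exact: sum_coef_sqr_nondecreasing.
by exists (B * `|z| ^+ 2) => _ [n _ <-]; apply: bessel.
Qed.

Lemma near_abs_coef_lt (z : H) (eta : R) : 0 < eta ->
  \forall j \near \oo, `|ip z (xs j)| < eta.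
Proof.
move=> heta; have := @cvgn_sum_coef_sqr z; rewrite sum_coef_sqr_series => /cvg_series_cvg_0.
move=> /cvgr_dist_lt /(_ (eta ^+ 2)) /(_ (exprn_gt0 2 heta)).
apply: filterS => j; rewrite sub0r normrN normrX.
by rewrite ltr_pXn2r ?nnegrE ?(ltW heta).
Qed.

Lemma lower_frame_approx (z : H) n (c : nat -> R) :
  A * `|z| ^+ 2 <=
  A * `|z - \sum_(j < n) c j *: xs j| ^+ 2 + \sum_(j < n) ip z (xs j) ^+ 2.
Proof.
set u := \sum_(j < n) _; set T := \sum_(j < n) c j ^+ 2.
set P := \sum_(j < n) c j * ip z (xs j); set S := \sum_(j < n) _ ^+ 2.
have hzu : ip z u = P := ip_sumr hip z xs c n.
have hT : A * T <= `|u| ^+ 2 := riesz_lower n c.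
have hAM : 2 * A * P <= A ^+ 2 * T + S.
  rewrite /P /T /S mulr_sumr mulr_sumr -big_split; apply: ler_sum => j _ /=.
  by have := sqr_ge0 (A * c j - ip z (xs j)); nra.
have hAT : A * (A * T) <= A * `|u| ^+ 2 by rewrite ler_pM2l.
by rewrite (sqr_normB hip) hzu; nra.
Qed.

Hypothesis xs_complete : complete_seq xs.

Lemma lower_frame (z : H) :
  A * `|z| ^+ 2 <= limn (fun n => \sum_(j < n) ip z (xs j) ^+ 2).
Proof.
apply/ler_addgt0Pr => e he.
have heA : 0 < e / A by rewrite divr_gt0.
have [n [c hc]] : exists n (c : nat -> R), `|z - \sum_(j < n) c j *: xs j| < Num.sqrt (e / A).
  by apply: xs_complete; rewrite sqrtr_gt0.
apply: le_trans (lower_frame_approx z n c) _; rewrite addrC.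
apply: lerD; first exact: nondecreasing_cvgn_le (sum_coef_sqr_nondecreasing z) (@cvgn_sum_coef_sqr z) n.
rewrite mulrC -ler_pdivlMr //; apply: ltW.
by rewrite -(sqr_sqrtr (ltW heA)) ltr_pXn2r ?nnegrE ?sqrtr_ge0.
Qed.

Lemma sqrt_lower_le_Psi (x y : H) : y <> x -> y <> - x ->
  (forall j, (`|ip x (xs j)| - `|ip y (xs j)|) ^+ 2 = ip (x - y) (xs j) ^+ 2) ->
  Num.sqrt A <= Psi ip xs x y.
Proof.
move=> yx yNx hterm; rewrite /Psi /abs_analysis_dist.
have -> : (fun n => \sum_(j < n) (`|ip x (xs j)| - `|ip y (xs j)|) ^+ 2) =
    fun n => \sum_(j < n) ip (x - y) (xs j) ^+ 2.
  by apply: funext => n; apply: eq_bigr => j _; apply: hterm.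
have hL := lower_frame (x - y).
have hxy : 0 < `|x - y| by rewrite normr_gt0 subr_eq0 eq_sym; apply/eqP.
have hm : 0 < Num.min `|x - y| `|x + y|.
  by rewrite lt_min hxy normr_gt0 addrC addr_eq0; apply/eqP.
rewrite ler_pdivlMr //; apply: (@le_trans _ _ (Num.sqrt A * `|x - y|)).
  by rewrite ler_pM2l ?sqrtr_gt0 // ge_min lexx.
rewrite -[`|x - y|]normr_id -sqrtr_sqr -sqrtrM ?(ltW hA) // ler_sqrt //.
by apply: le_trans hL; rewrite mulr_ge0 ?(ltW hA) ?sqr_ge0.
Qed.

Lemma sqr_dist_span_without_ge (k : nat) (u : H) :
  span_without xs k u -> A <= `|xs k - u| ^+ 2.
Proof.
move=> [n [c [ck ->]]]; have km : (k < n + k.+1)%N by rewrite addnS ltnS leq_addl.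
pose c' (j : nat) : R := (j == k)%:R - (if (j < n)%N then c j else 0).
have c'k : c' k = 1 by rewrite /c' eqxx; case: ifP; rewrite ?ck subr0.
have -> : xs k - \sum_(j < n) c j *: xs j = \sum_(j < n + k.+1) c' j *: xs j.
  rewrite -(sum_indicator xs km) (sum_widen xs c (leq_addr k.+1 n)) -sumrB.
  by apply: eq_bigr => j _; rewrite scalerBl.
apply: le_trans (riesz_lower _ c').
rewrite (bigD1 (Ordinal km)) //= c'k expr1n ler_peMr ?(ltW hA) // lerDl.
by apply: sumr_ge0 => j _; apply: sqr_ge0.
Qed.

End RieszSequence.

Section Biorthogonal.
Variables (R : realType) (H : completeNormedModType R) (ip : H -> H -> R).
Hypothesis hip : is_inner_product ip.
Variables (xs : nat -> H) (A : R).
Hypotheses (hA : 0 < A) (riesz_lower : lower_riesz_bound xs A).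

Lemma exists_biorthogonal (k : nat) :
  exists w : H, [/\ A <= `|w| ^+ 2, ip w (xs k) = `|w| ^+ 2 &
                   forall j, j != k -> ip w (xs j) = 0].
Proof.
have [w [hmin horth hk]] := exists_orthogonal_residual hip (xs k)
  (span_without0 xs k) (@span_without_lin _ _ xs k).
exists w; split => //; last by move=> j jk; apply/horth/span_without_xs.
by apply: hmin => u; apply: sqr_dist_span_without_ge.
Qed.

Lemma exists_coef_reflection (x : H) (k : nat) :
  exists y : H, `|y - x| <= 2 * `|ip x (xs k)| / Num.sqrt A /\
    forall j, ip y (xs j) = if j == k then - ip x (xs k) else ip x (xs j).
Proof.
have [w [hwA hwk hwj]] := exists_biorthogonal k.
set a := ip x (xs k).
have hw2 : 0 < `|w| ^+ 2 := lt_le_trans hA hwA.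
have hw0 : `|w| != 0 by apply: contraTneq hw2 => ->; rewrite expr0n ltxx.
have hw : Num.sqrt A <= `|w| by rewrite -[`|w|]normr_id -sqrtr_sqr ler_sqrt.
exists (x - (2 * a / `|w| ^+ 2) *: w); split.
  rewrite addrAC subrr add0r normrN normrZ normrM normfV normrM normr_nat.
  rewrite (ger0_norm (ltW hw2)).
  have -> : 2 * `|a| / `|w| ^+ 2 * `|w| = 2 * `|a| / `|w| by field.
  by apply: ler_wpM2l; rewrite ?mulr_ge0 // lef_pV2 ?posrE ?sqrtr_gt0 // (lt_le_trans _ hw) ?sqrtr_gt0.
move=> j; rewrite (ipBl hip) (ipZl hip).
case: eqP => [->|/eqP jk]; last by rewrite hwj // mulr0 subr0.
by rewrite hwk -/a divfK ?sqrf_eq0 //; lra.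
Qed.

End Biorthogonal.

Lemma finite_support_of_stable (R : realType) (H : completeNormedModType R)
  (ip : H -> H -> R) (hip : is_inner_product ip) (xs : nat -> H)
  (hxs : riesz_basis xs) (x : H) :
  stable_pr_near ip xs x -> exists N, forall j, (N <= j)%N -> ip x (xs j) = 0.
Proof.
case/riesz_basisP: hxs => _ [A [B [hA hB lower upper]]] [C [_ hst]].
have [d [hd hy]] : exists d, 0 < d /\ forall y, `|y - x| < d -> y <> x -> y <> - x ->
    1 - 2^-1 <= C * Psi ip xs x y by apply: hst; rewrite invr_gt0.
apply: contrapT => hfin.
have hinf N : exists2 j, (N <= j)%N & ip x (xs j) != 0.
  apply: contrapT => hN; apply: hfin; exists N => j Nj.
  by apply: contrapT => /eqP hj; apply: hN; exists j.
have hsmall : 0 < d * Num.sqrt A / 2 by rewrite !mulr_gt0 ?sqrtr_gt0.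
have [M _ hM] := near_abs_coef_lt hip hB upper x hsmall.
have [j0 _ hj0] := hinf 0%N.
have [k hk hk0] := hinf (maxn M j0.+1).
have hks := hM k (leq_trans (leq_maxl _ _) hk); rewrite /= in hks.
have hj0k : j0 != k by rewrite neq_ltn (leq_trans (leq_maxr _ _) hk).
have [y [hyx hyc]] := exists_coef_reflection hip hA lower x k.
suff : 1 - 2^-1 <= C * Psi ip xs x y.
  rewrite Psi_eq0 ?mulr0; first lra.
  by move=> j; rewrite hyc; case: eqP => [->|]; rewrite ?normrN.
apply: hy => [|yx|yNx].
- apply: le_lt_trans hyx _; rewrite ltr_pdivrMr ?sqrtr_gt0 //.
  by move: hks; rewrite ltr_pdivlMr //; lra.
- move: (hyc k); rewrite yx eqxx => h.
  by move/negP: hk0; apply; apply/eqP; lra.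
- move: (hyc j0); rewrite yNx (ipNl hip) (negbTE hj0k) => h.
  by move/negP: hj0; apply; apply/eqP; lra.
Qed.

Lemma stable_of_finite_support (R : realType) (H : normedModType R)
  (ip : H -> H -> R) (hip : is_inner_product ip) (xs : nat -> H)
  (hxs : riesz_basis xs) (x : H) :
  (exists N, forall j, (N <= j)%N -> ip x (xs j) = 0) -> stable_pr_near ip xs x.
Proof.
case/riesz_basisP: hxs => xs_complete [A [B [hA hB lower upper]]] [N hN].
have [d [hd hd_eq]] := sqr_abs_coef_dist_near hip hN.
have hsA : 0 < Num.sqrt A by rewrite sqrtr_gt0.
exists (Num.sqrt A)^-1; split; first by rewrite invr_gt0.
move=> e he; exists d; split => // y hy yx yNx.
have hxy : `|x - y| < d by rewrite distrC.
have hPsi := sqrt_lower_le_Psi hip hA hB lower upper xs_complete yx yNx (hd_eq y hxy).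
have : 1 <= (Num.sqrt A)^-1 * Psi ip xs x y by rewrite mulrC ler_pdivlMr // mul1r.
lra.
Qed.

Unset Implicit Arguments.

Theorem proposition5p1 (R : realType) (H : completeNormedModType R)
  (ip : H -> H -> R) (hip : is_inner_product ip)
  (hinf : infinite_dimensional H)
  (xs : nat -> H) (hxs : riesz_basis xs) (x : H) :
  stable_pr_near ip xs x <->
  exists N : nat, forall j : nat, (N <= j)%N -> ip x (xs j) = 0.
Proof.
split; [exact: (finite_support_of_stable hip hxs) | exact: (stable_of_finite_support hip hxs)].
Qed.
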